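(* Let $Q$ be the quiver with one vertex $e$ and one loop $a$, let $Z=\{a^m\}$ with $m\ge2$ such that the characteristic $p$ of $k$ divides $m$, and let $\Lambda=kQ/\langle Z\rangle$. The following are equivalent: (i) the Lie algebra $\operatorname{H}^1(\Lambda,\Lambda)$ is simple; (ii) $\operatorname{H}^1(\Lambda,\Lambda)$ is semisimple; (iii) $m=p$ and $p>2$; (iv) $\operatorname{H}^1(\Lambda,\Lambda)$ is isomorphic to the Witt Lie algebra $W(1,1):=\operatorname{Der}(k[X]/(X^p))$ and $p>2$.
   Context: $k$ is an algebraically closed field of characteristic $p>0$. $\operatorname{H}^1(\Lambda,\Lambda)=\operatorname{Der}_k(\Lambda)/\operatorname{Ad}_k(\Lambda)$ is the Lie algebra of derivations modulo inner derivations (commutator bracket). A Lie algebra is semisimple if its solvable radical is zero. *)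

From HB Require Import structures.
From mathcomp Require Import all_boot all_order all_algebra.
Set Implicit Arguments. Unset Strict Implicit. Unset Printing Implicit Defensive.
Import GRing.Theory.
Local Open Scope ring_scope.

(* ---------- Generic Lie-algebra notions, for a quotient Lie algebra D / A
   where D is a Lie subalgebra of an ambient Lie algebra (V, br) and A is an
   ideal of D.  Subspaces of D/A are identified with subspaces I of V with
   A <= I <= D (correspondence theorem). ---------- *)
Section LieQuot.
Variables (K : fieldType) (V : lmodType K) (br : V -> V -> V).

Definition subsp (S : V -> Prop) : Prop :=
  S 0 /\ forall (a : K) (u v : V), S u -> S v -> S (a *: u + v).

Definition incl (S T : V -> Prop) : Prop := forall x, S x -> T x.

Definition brsp (I J : V -> Prop) : V -> Prop :=
  fun x => forall S, subsp S -> (forall u v, I u -> J v -> S (br u v)) -> S x.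

Definition addsp (I J : V -> Prop) : V -> Prop :=
  fun x => exists u v, [/\ I u, J v & x = u + v].

Definition qideal (D A I : V -> Prop) : Prop :=
  [/\ subsp I, incl A I, incl I D & incl (brsp D I) I].

Fixpoint qderived (A I : V -> Prop) (n : nat) : V -> Prop :=
  if n is n'.+1 then addsp (brsp (qderived A I n') (qderived A I n')) A
  else I.

Definition qsolvable (A I : V -> Prop) : Prop :=
  exists n, incl (qderived A I n) A.

(* D / A is semisimple: its solvable radical (the sum of all solvable
   ideals) is zero, i.e. every solvable ideal is zero *)
Definition qsemisimple (D A : V -> Prop) : Prop :=
  forall I, qideal D A I -> qsolvable A I -> incl I A.

Definition qsimple (D A : V -> Prop) : Prop :=
  ~ incl (brsp D D) A /\
  forall I, qideal D A I -> incl I A \/ incl D I.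

End LieQuot.

(* Isomorphism of Lie algebras D1/A1 ~= D2/A2: a linear map inducing a
   bijective bracket-preserving map on the quotients. *)
Definition qiso (K : fieldType) (V1 V2 : lmodType K)
  (br1 : V1 -> V1 -> V1) (D1 A1 : V1 -> Prop)
  (br2 : V2 -> V2 -> V2) (D2 A2 : V2 -> Prop) : Prop :=
  exists f : {linear V1 -> V2},
  [/\ forall u, D1 u -> D2 (f u),
      forall u, D1 u -> (A2 (f u) <-> A1 u),
      forall w, D2 w -> exists u, D1 u /\ A2 (f u - w) &
      forall u v, D1 u -> D1 v -> A2 (f (br1 u v) - br2 (f u) (f v))].

(* ---------- The truncated polynomial algebra Lambda = k[a]/(a^m) =
   kQ/<a^m>, for Q the one-loop quiver, in the monomial basis
   1, a, ..., a^(m-1): elements are column vectors 'cV[k]_m. ---------- *)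
Section Trunc.
Variables (k : fieldType) (m : nat).

Definition lam_poly (u : 'cV[k]_m) : {poly k} := \sum_(i < m) u i 0 *: 'X^i.
Definition lam_of (q : {poly k}) : 'cV[k]_m := \col_(i < m) (q %% 'X^m)`_i.

Definition lam_mul (u v : 'cV[k]_m) : 'cV[k]_m := lam_of (lam_poly u * lam_poly v).

Definition gl_br (D E : 'M[k]_m) : 'M[k]_m := D *m E - E *m D.

Definition Der (D : 'M[k]_m) : Prop :=
  forall u v, D *m lam_mul u v = lam_mul (D *m u) v + lam_mul u (D *m v).

Definition Ad (D : 'M[k]_m) : Prop :=
  exists x, forall u, D *m u = lam_mul x u - lam_mul u x.

Definition zerosp (D : 'M[k]_m) : Prop := D = 0.
End Trunc.

From HB Require Import structures.
From mathcomp Require Import all_boot all_order all_algebra.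
From mathcomp Require Import ring zify.
From Stdlib Require Import Classical.
Set Implicit Arguments. Unset Strict Implicit. Unset Printing Implicit Defensive.
Import GRing.Theory.
Local Open Scope ring_scope.

(* Since [Lambda = k[X]/(X^m)] is commutative, [H^1] is just [Der Lambda], and
   because [m = 0] in [k] every derivation is [u |-> u' q] for a [q] unique
   modulo [X^m], with bracket [[q, r] = q r' - r q'].  If [m >= 2p] the
   derivations with [q] in [X^(m-p) k[X]] form a nonzero abelian ideal (their
   brackets are divisible by [X^(2(m-p))]), and if [m = p = 2] the constant
   [q] do; so semisimplicity forces [m = p > 2].  For [m = p > 2], bracketing
   with [d/dX] differentiates, which brings any nonzero ideal down to [d/dX],
   and bracketing [d/dX] with [X^(j+1) d/dX] brings it back up to every
   [X^j d/dX]; hence the algebra is simple. *)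

Section LieQuotient.
Variables (K : fieldType) (V : lmodType K) (br : V -> V -> V).
Implicit Types (S I J D A : V -> Prop).

Lemma subsp0 S : subsp S -> S 0.
Proof. by case. Qed.

Lemma subspD S u v : subsp S -> S u -> S v -> S (u + v).
Proof. by move=> [_ hS] Su Sv; have := hS 1 u v Su Sv; rewrite scale1r. Qed.

Lemma subspZ S a u : subsp S -> S u -> S (a *: u).
Proof. by move=> [S0 hS] Su; have := hS a u 0 Su S0; rewrite addr0. Qed.

Lemma subsp_eq0 A : (forall x, A x <-> x = 0) -> subsp A.
Proof.
move=> A0; split=> [|a u v /A0 -> /A0 ->]; apply/A0 => //.
by rewrite scaler0 addr0.
Qed.

Lemma brsp_in I J u v : I u -> J v -> brsp br I J (br u v).
Proof. by move=> Iu Jv S _; apply. Qed.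

Lemma brsp_min I J S : subsp S -> (forall u v, I u -> J v -> S (br u v)) ->
  incl (brsp br I J) S.
Proof. by move=> hS hIJ x; apply. Qed.

Lemma brsp_subsp I J : subsp (brsp br I J).
Proof.
split=> [S [S0 _] _ //|a u v hu hv S hS hIJ].
by case: (hS) => _; apply; [apply: hu | apply: hv].
Qed.

Lemma brspS I J I' J' : incl I I' -> incl J J' -> incl (brsp br I J) (brsp br I' J').
Proof.
move=> sII' sJJ'; apply: brsp_min => [|u v Iu Jv]; first exact: brsp_subsp.
by apply: brsp_in; [apply: sII' | apply: sJJ'].
Qed.

Lemma qideal_br D A I u v : qideal br D A I -> D u -> I v -> I (br u v).
Proof. by case=> _ _ _ hI Du Iv; apply: hI; apply: brsp_in. Qed.

Lemma addsp_eq0 X A : (forall x, A x <-> x = 0) -> subsp X ->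
  forall x, addsp X A x <-> X x.
Proof.
move=> A0 hX x; split=> [[u [v [Xu /A0 -> ->]]]|Xx]; first by rewrite addr0.
by exists x, 0; split; rewrite ?addr0 //; apply/A0.
Qed.

Lemma abelian_ideal_not_qsemisimple D A I E : subsp A -> qideal br D A I ->
  incl (brsp br I I) A -> I E -> ~ A E -> ~ qsemisimple br D A.
Proof.
move=> hA hI abI IE AE hss; apply/AE/(hss I hI) => //.
by exists 1%N => _ [u [v [/abI Au Av ->]]]; apply: subspD.
Qed.

Lemma eq_qsimple D A A' : (forall x, A x <-> A' x) ->
  qsimple br D A -> qsimple br D A'.
Proof.
move=> AA' [nab hs]; split=> [ab | I [I_subsp A'I ID hI]].
  by apply: nab => x /ab /AA'.
have hI' : qideal br D A I by split=> // x /AA' /A'I.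
by case: (hs I hI') => [sIA | sDI]; [left=> x /sIA /AA' | right].
Qed.

Section ZeroQuotient.
Variables D A : V -> Prop.
Hypothesis A0 : forall x, A x <-> x = 0.
Hypothesis brsp_DD : incl (brsp br D D) D.

(* In a simple algebra D = [D, D], so the derived series of the only
   candidate solvable ideal, D itself, never shrinks. *)
Lemma qsimple_qsemisimple : qsimple br D A -> qsemisimple br D A.
Proof.
move=> [nab hs] I hI [N hN]; have [sIA|sDI] := hs I hI; first exact: sIA.
pose J := addsp (brsp br D D) A.
have JE x : J x <-> brsp br D D x by apply: addsp_eq0; last exact: brsp_subsp.
have J_subsp : subsp J.
  split=> [|a u v /JE Ju /JE Jv]; apply/JE.
    exact: subsp0 (brsp_subsp _ _).
  by case: (brsp_subsp D D) => _; apply.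
have hJ : qideal br D A J.
  split=> //.
  - by move=> x /A0 ->; apply: subsp0.
  - by move=> x /JE /brsp_DD.
  - apply: brsp_min => // u v Du /JE /brsp_DD Dv.
    by apply/JE; apply: brsp_in.
have sDJ : incl D J.
  have [sJA|//] := hs J hJ.
  by case: nab => x /JE /sJA.
have sDderived i : incl D (qderived br A I i).
  elim: i => [//|i IHi] x /sDJ [u [v [Du Av ->]]].
  by exists u, v; split => //; apply: brspS Du.
by case: nab => x /brsp_DD /sDderived /hN.
Qed.

End ZeroQuotient.
End LieQuotient.

Section Isomorphism.
Variables (K : fieldType) (V1 V2 : lmodType K).
Variables (br1 : V1 -> V1 -> V1) (D1 A1 : V1 -> Prop).
Variables (br2 : V2 -> V2 -> V2) (D2 A2 : V2 -> Prop).
Hypothesis A1_0 : forall x, A1 x <-> x = 0.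
Hypothesis A2_0 : forall x, A2 x <-> x = 0.
Hypothesis D1_subsp : subsp D1.

Lemma qsimple_qiso :
  qiso br1 D1 A1 br2 D2 A2 -> qsimple br2 D2 A2 -> qsimple br1 D1 A1.
Proof.
move=> [f [fD fA fsurj fbr]] [nab hs].
have f_br u v : D1 u -> D1 v -> f (br1 u v) = br2 (f u) (f v).
  by move=> Du Dv; apply/subr0_eq/A2_0/fbr.
have f_onto w : D2 w -> exists2 u, D1 u & w = f u.
  by move=> /fsurj [u [Du /A2_0 /subr0_eq <-]]; exists u.
split=> [ab1|I [I_subsp A1I ID1 hI]].
  case: nab; apply: brsp_min => [|_ _ /f_onto [u Du ->] /f_onto [v Dv ->]].
    exact: subsp_eq0.
  have /A1_0 uv0 : A1 (br1 u v) by apply: ab1; apply: brsp_in.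
  by apply/A2_0; rewrite -f_br // uv0 linear0.
pose fI w := exists2 u, I u & w = f u.
have fI_subsp : subsp fI.
  split=> [|a _ _ [u Iu ->] [v Iv ->]]; first by exists 0; rewrite ?linear0 //; apply: subsp0.
  by exists (a *: u + v); rewrite ?linearP //; case: I_subsp => _; apply.
have hfI : qideal br2 D2 A2 fI.
  split=> // [w /A2_0 ->|_ [u /ID1 Du ->]|]; first by exists 0; rewrite ?linear0 //; apply: subsp0.
    exact: fD.
  apply: brsp_min => // _ _ /f_onto [u Du ->] [v Iv ->].
  by exists (br1 u v); [apply: hI; apply: brsp_in | rewrite f_br //; apply: ID1].
have [sfIA|sDfI] := hs fI hfI; [left => u Iu | right => u Du].
  by apply/fA; [apply: ID1 | apply: sfIA; exists u].
have [v Iv fuv] := sDfI _ (fD _ Du).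
have Duv : D1 (u - v).
  by rewrite addrC -scaleN1r; case: D1_subsp => _; apply => //; apply: ID1.
suff /A1_0 /subr0_eq -> : A1 (u - v) by [].
by apply/(fA _ Duv)/A2_0; rewrite linearB fuv subrr.
Qed.

End Isomorphism.

Lemma mulmx_cVP (R : pzRingType) (m n : nat) (A B : 'M[R]_(m, n)) :
  (forall u : 'cV_n, A *m u = B *m u) -> A = B.
Proof.
move=> eqAB; apply/matrixP => i j.
by have /matrixP/(_ i 0) := eqAB (delta_mx j 0); rewrite -!colE !mxE.
Qed.

Section Commutativity.
Variables (k : fieldType) (m : nat).
Implicit Types (u v : 'cV[k]_m).

Lemma lam_mulC u v : lam_mul u v = lam_mul v u.
Proof. by rewrite /lam_mul mulrC. Qed.

Lemma Ad_eq0 (D : 'M[k]_m) : Ad D <-> D = 0.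
Proof.
split=> [[x Dx]|->]; last by exists 0 => u; rewrite mul0mx lam_mulC subrr.
by apply: mulmx_cVP => u; rewrite Dx lam_mulC subrr mul0mx.
Qed.

Lemma Ad_subsp : subsp (@Ad k m).
Proof. exact/subsp_eq0/Ad_eq0. Qed.

End Commutativity.

Section TruncatedAlgebra.
Variables (k : fieldType) (n : nat).
Local Notation m := n.+1.
Local Notation lam_of := (@lam_of k m).
Implicit Types (q r : {poly k}) (u v : 'cV[k]_m).

Fact lam_of_is_linear : semilinear lam_of.
Proof.
by split=> [a q|q r]; apply/matrixP => i j; rewrite !mxE (modpZl, modpD) (coefZ, coefD).
Qed.

HB.instance Definition _ :=
  GRing.isSemilinear.Build k {poly k} 'cV[k]_m _ lam_of lam_of_is_linear.

Lemma size_modXn q : (size (q %% 'X^m)%R <= m)%N.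
Proof.
by have := @ltn_modpN0 _ q 'X^m (monic_neq0 (monicXn _ m)); rewrite size_polyXn.
Qed.

Lemma lam_polyE u : lam_poly u = \poly_(i < m) u (inord i) 0.
Proof. by rewrite poly_def; apply: eq_bigr => i _; rewrite inord_val. Qed.

Lemma size_lam_poly u : (size (lam_poly u) <= m)%N.
Proof. by rewrite lam_polyE size_poly. Qed.

Lemma lam_ofK q : lam_poly (lam_of q) = q %% 'X^m.
Proof.
apply/polyP => i; rewrite lam_polyE coef_poly.
case: ifP => [im | /negbT]; first by rewrite mxE inordK.
by rewrite -leqNgt => /(leq_trans (size_modXn q)) mi; rewrite nth_default.
Qed.

Lemma lam_polyK : cancel (@lam_poly k m) lam_of.
Proof.
move=> u; apply/matrixP => i j; rewrite ord1 mxE modp_small; last first.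
  by rewrite size_polyXn ltnS size_lam_poly.
by rewrite lam_polyE coef_poly ltn_ord inord_val.
Qed.

Lemma lam_of_modXn q : lam_of (q %% 'X^m) = lam_of q.
Proof. by apply/matrixP => i j; rewrite !mxE modp_id. Qed.

Lemma lam_of_modXnM q r : lam_of ((q %% 'X^m) * r) = lam_of (q * r).
Proof. by rewrite -[LHS]lam_of_modXn mulrC modp_mul mulrC lam_of_modXn. Qed.

Lemma lam_of_eq0 q : lam_of q = 0 -> q %% 'X^m = 0.
Proof. by move=> q0; rewrite -lam_ofK q0 -(linear0 lam_of) lam_ofK mod0p. Qed.

Lemma lam_mulE q r : lam_mul (lam_of q) (lam_of r) = lam_of (q * r).
Proof.
by rewrite /lam_mul !lam_ofK lam_of_modXnM mulrC lam_of_modXnM mulrC.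
Qed.

End TruncatedAlgebra.

Section Derivations.
Variables (k : fieldType) (n : nat).
Local Notation m := n.+1.
Local Notation lam_of := (@lam_of k m).
Implicit Types (q r : {poly k}) (u : 'cV[k]_m).

Definition der_mx q : 'M[k]_m := \matrix_(i, j) lam_of (('X^j)^`() * q) i 0.

Lemma der_mxE q u : der_mx q *m u = lam_of ((lam_poly u)^`() * q).
Proof.
rewrite /lam_poly (big_morph _ (@derivD _) (@deriv0 _)) mulr_suml linear_sum.
apply/matrixP => i z; rewrite ord1 !mxE summxE; apply: eq_bigr => j _.
by rewrite derivZ -scalerAl linearZ !mxE mulrC.
Qed.

Fact der_mx_is_linear : semilinear der_mx.
Proof.
split=> [a q|q r]; apply: mulmx_cVP => u.
  by rewrite -scalemxAl !der_mxE -scalerAr linearZ.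
by rewrite mulmxDl !der_mxE mulrDr linearD.
Qed.

HB.instance Definition _ :=
  GRing.isSemilinear.Build k {poly k} 'M[k]_m _ der_mx der_mx_is_linear.

Lemma der_mx_modXn q : der_mx (q %% 'X^m) = der_mx q.
Proof. by apply: mulmx_cVP => u; rewrite !der_mxE !(mulrC _^`()) lam_of_modXnM. Qed.

Hypothesis m0 : m%:R = 0 :> k.

Lemma deriv_modXn q : (q %% 'X^m)^`() %% 'X^m = q^`() %% 'X^m.
Proof.
have dXm : ('X^m)^`() = 0 :> {poly k} by rewrite derivXn -mulr_natl -polyC_natr m0 mul0r.
by rewrite {2}(divp_eq q 'X^m) derivD derivM dXm mulr0 addr0 modpD modp_mull add0r.
Qed.

Lemma lam_of_derivM_modXn q r : lam_of ((q %% 'X^m)^`() * r) = lam_of (q^`() * r).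
Proof. by rewrite -[LHS]lam_of_modXnM deriv_modXn lam_of_modXnM. Qed.

Lemma Der_der_mx q : Der (der_mx q).
Proof.
move=> u v; rewrite -[u]lam_polyK -[v]lam_polyK lam_mulE !der_mxE !lam_ofK.
rewrite !lam_of_derivM_modXn !lam_mulE -linearD; congr lam_of.
by rewrite derivM; ring.
Qed.

Lemma der_mx_br q r : gl_br (der_mx q) (der_mx r) = der_mx (q * r^`() - r * q^`()).
Proof.
apply: mulmx_cVP => u; rewrite /gl_br mulmxBl -!mulmxA !der_mxE !lam_ofK.
by rewrite !lam_of_derivM_modXn -linearB; congr lam_of; rewrite !derivM; ring.
Qed.

Lemma der_mx_brXn i j :
  gl_br (der_mx 'X^i) (der_mx 'X^j) = der_mx ((j%:R - i%:R) *: 'X^((i + j).-1)).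
Proof.
rewrite der_mx_br !derivXn !mulrnAr -!exprD scalerBl !scaler_nat.
by congr der_mx; case: i j => [|i] [|j] //=; rewrite ?addn0 ?addnS ?addSn //= [(j + i)%N]addnC.
Qed.

Hypothesis n_gt0 : (0 < n)%N.

Lemma der_mxX q : der_mx q *m lam_of 'X = lam_of q.
Proof.
rewrite der_mxE lam_ofK modp_small ?derivX ?mul1r //.
by rewrite size_polyX size_polyXn !ltnS.
Qed.

Lemma der_mx_eq0 q : der_mx q = 0 -> q %% 'X^m = 0.
Proof. by move=> q0; apply: lam_of_eq0; rewrite -der_mxX q0 mul0mx. Qed.

(* By Leibniz, [D] maps [X^j] to [j X^(j-1) D(X)]. *)
Lemma Der_der_mxE D : Der D -> D = der_mx (lam_poly (D *m lam_of 'X)).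
Proof.
move=> DerD; set g := lam_poly (D *m lam_of 'X).
have D1 : D *m lam_of 1 = 0.
  have := DerD (lam_of 1) (lam_of 1); rewrite lam_mulE mulr1.
  rewrite -[D *m lam_of 1]lam_polyK !lam_mulE mulr1 mul1r lam_polyK => e.
  by apply: (@addrI _ (D *m lam_of 1)); rewrite addr0 -e.
have DXj j : D *m lam_of 'X^j = lam_of (('X^j)^`() * g).
  elim: j => [|j IHj]; first by rewrite expr0 D1 derivC mul0r linear0.
  rewrite exprSr -lam_mulE DerD IHj -[D *m lam_of 'X]lam_polyK -/g.
  rewrite -[lam_of 'X]lam_polyK lam_ofK modp_small; last first.
    by rewrite size_polyX size_polyXn !ltnS.
  by rewrite !lam_mulE -linearD; congr lam_of; rewrite derivM derivX; ring.
apply: mulmx_cVP => u; rewrite der_mxE -{1}[u]lam_polyK /lam_poly.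
rewrite linear_sum mulmx_sumr (big_morph _ (@derivD _) (@deriv0 _)) mulr_suml.
rewrite linear_sum; apply: eq_bigr => j _.
by rewrite linearZ -scalemxAr DXj derivZ -scalerAl linearZ.
Qed.

Lemma DerP D : Der D <-> exists q, D = der_mx q.
Proof. by split=> [/Der_der_mxE -> | [q ->]]; [eexists | exact: Der_der_mx]. Qed.

Lemma Der_subsp : subsp (@Der k m).
Proof.
split=> [|a _ _ /DerP [q ->] /DerP [r ->]]; apply/DerP.
  by exists 0; rewrite linear0.
by exists (a *: q + r); rewrite linearP.
Qed.

Lemma brsp_Der : incl (brsp (@gl_br k m) (@Der k m) (@Der k m)) (@Der k m).
Proof.
apply: brsp_min => [|_ _ /DerP [q ->] /DerP [r ->]]; first exact: Der_subsp.
by rewrite der_mx_br; apply: Der_der_mx.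
Qed.

End Derivations.

Lemma derivn_predsize (R : nzRingType) (q : {poly R}) :
  q^`((size q).-1) = (lead_coef q *+ (size q).-1`!)%:P.
Proof.
apply/polyP => -[|i]; rewrite coef_derivn coefC /=; first by rewrite addn0 ffactnn.
by rewrite nth_default ?mul0rn //; lia.
Qed.

Lemma natr_pchar_neq0 (R : nzRingType) p j :
  p \in [pchar R] -> (0 < j < p)%N -> j%:R != 0 :> R.
Proof.
move=> p_char /andP [j_gt0 jp]; rewrite -(dvdn_pcharf p_char).
by apply: contraL jp => /(dvdn_leq j_gt0); rewrite leqNgt.
Qed.

Lemma fact_pchar_neq0 (R : idomainType) p j :
  p \in [pchar R] -> (j < p)%N -> j`!%:R != 0 :> R.
Proof.
move=> p_char jp; rewrite fact_prod natr_prod prodf_seq_neq0; apply/allP => i.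
rewrite mem_index_iota => /andP [i_gt0 ij]; apply: natr_pchar_neq0 p_char _.
by rewrite i_gt0 (leq_trans ij jp).
Qed.

Section WittIdeals.
Variables (k : fieldType) (n : nat).
Local Notation m := n.+1.
Hypothesis m_char : m \in [pchar k].
Hypothesis m_gt2 : (2 < m)%N.
Let m0 : m%:R = 0 :> k := pcharf0 m_char.
Implicit Types q : {poly k}.

Variable I : 'M[k]_m -> Prop.
Hypothesis I_ideal : qideal (@gl_br k m) (@Der k m) (@Ad k m) I.
Let I_subsp : subsp I. Proof. by case: I_ideal. Qed.

Lemma ideal_der_mxZ c q : c != 0 -> I (der_mx n (c *: q)) -> I (der_mx n q).
Proof.
by move=> c0; rewrite linearZ => /(subspZ c^-1 I_subsp); rewrite scalerA mulVf ?scale1r.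
Qed.

Lemma ideal_der_mx_brXn i j :
  I (der_mx n 'X^i) -> I (der_mx n ((i%:R - j%:R) *: 'X^((j + i).-1))).
Proof. by rewrite -der_mx_brXn //; apply: qideal_br I_ideal _; apply: Der_der_mx. Qed.

(* Bracketing with [d/dX = der_mx 1] differentiates, and the top derivative
   of [q] is a nonzero constant because [deg q] is below the characteristic. *)
Lemma ideal_der_mx1 q : q != 0 -> (size q <= m)%N -> I (der_mx n q) -> I (der_mx n 1).
Proof.
move=> q0 qm Iq; have Iderivn j : I (der_mx n q^`(j)).
  elim: j => [//|j IHj]; rewrite derivnS.
  have := qideal_br I_ideal (Der_der_mx m0 1) IHj.
  by rewrite der_mx_br // derivC mulr0 subr0 mul1r.
apply: (@ideal_der_mxZ (lead_coef q *+ (size q).-1`!)).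
  by rewrite -mulr_natr mulf_neq0 ?lead_coef_eq0 ?(fact_pchar_neq0 m_char) //; lia.
by rewrite alg_polyC -derivn_predsize.
Qed.

Lemma ideal_der_mxXn j : I (der_mx n 1) -> (j < m)%N -> I (der_mx n 'X^j).
Proof.
move=> I1; have IXlow i : (i < n)%N -> I (der_mx n 'X^i).
  move=> iln; have := @ideal_der_mx_brXn 0 i.+1; rewrite expr0 addn0 sub0r => /(_ I1).
  by apply: ideal_der_mxZ; rewrite oppr_eq0 (natr_pchar_neq0 m_char).
rewrite ltnS leq_eqVlt => /orP [/eqP -> | ]; last exact: IXlow.
have nN1 : n%:R = -1 :> k by apply/eqP; rewrite -addr_eq0 -mulrSr m0.
have := @ideal_der_mx_brXn 1 n (IXlow 1%N ltac:(lia)); rewrite addn1 /= nN1 opprK.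
by apply: ideal_der_mxZ; apply: (natr_pchar_neq0 (j := 2) m_char).
Qed.

Lemma ideal_Der : I (der_mx n 1) -> incl (@Der k m) I.
Proof.
move=> I1 D /(Der_der_mxE (ltnW m_gt2)) ->; rewrite /lam_poly linear_sum.
apply: (big_ind I) => [|u v Iu Iv|j _]; first exact: subsp0.
  exact: subspD.
by rewrite linearZ; apply: subspZ => //; apply: ideal_der_mxXn.
Qed.

End WittIdeals.

Lemma Der_qsimple (k : fieldType) (p : nat) : p \in [pchar k] -> (2 < p)%N ->
  qsimple (@gl_br k p) (@Der k p) (@Ad k p).
Proof.
case: p => [//|n] p_char p_gt2; have m0 := pcharf0 p_char.
have n_gt0 : (0 < n)%N by lia.
split=> [ab | I hI].
  have := ab _ (brsp_in (Der_der_mx m0 1) (Der_der_mx m0 'X)).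
  rewrite Ad_eq0 der_mx_br // derivX derivC mulr0 subr0 mulr1 => /(der_mx_eq0 n_gt0).
  by rewrite modp_small ?size_poly1 ?size_polyXn // => /eqP; rewrite oner_eq0.
have [[E IE E0] | noE] := classic (exists2 E, I E & E <> 0); last first.
  by left=> E IE; apply/Ad_eq0; apply: NNPP => E0; apply: noE; exists E.
right; apply: (ideal_Der p_char p_gt2 hI).
have /(DerP m0 n_gt0) [q Eq] : Der E by case: hI => _ _ /(_ E IE).
apply: (@ideal_der_mx1 _ _ p_char p_gt2 _ hI (q %% 'X^(n.+1))).
- by apply/eqP => q0; apply: E0; rewrite Eq -der_mx_modXn q0 linear0.
- exact: size_modXn.
- by rewrite der_mx_modXn -Eq.
Qed.

Section PowerIdeal.
Variables (k : fieldType) (n : nat).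
Local Notation m := n.+1.
Local Notation gl_br := (@gl_br k m).
Local Notation Der := (@Der k m).
Local Notation Ad := (@Ad k m).
Hypothesis m0 : m%:R = 0 :> k.
Hypothesis n_gt0 : (0 < n)%N.
Variable r : nat.
Hypotheses (r0 : r%:R = 0 :> k) (r_lt_m : (r < m)%N) (m_le_2r : (m <= r.*2)%N).

Definition Xpow_ideal (D : 'M[k]_m) := exists q : {poly k}, D = der_mx n ('X^r * q).

Lemma deriv_XpowM (q : {poly k}) : ('X^r * q)^`() = 'X^r * q^`().
Proof. by rewrite derivM derivXn -mulr_natl -polyC_natr r0 !mul0r add0r. Qed.

Lemma Xpow_ideal_qideal : qideal gl_br Der Ad Xpow_ideal.
Proof.
have Xpow_subsp : subsp Xpow_ideal.
  split=> [|a _ _ [q ->] [q' ->]]; first by exists 0; rewrite mulr0 linear0.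
  by exists (a *: q + q'); rewrite mulrDr -scalerAr linearP.
split=> // [D /Ad_eq0 ->|_ [q ->]|]; first exact: subsp0.
  exact: Der_der_mx.
apply: brsp_min => // _ _ /(DerP m0 n_gt0) [f ->] [q ->].
by rewrite der_mx_br // deriv_XpowM; exists (f * q^`() - q * f^`()); congr der_mx; ring.
Qed.

Lemma Xpow_ideal_abelian : incl (brsp gl_br Xpow_ideal Xpow_ideal) Ad.
Proof.
apply: brsp_min => [|_ _ [q ->] [q' ->]]; first exact: Ad_subsp.
rewrite der_mx_br // !deriv_XpowM Ad_eq0 -der_mx_modXn.
have -> : 'X^r * q * ('X^r * q'^`()) - 'X^r * q' * ('X^r * q^`()) =
          ('X^(r.*2 - m) * (q * q'^`() - q' * q^`())) * 'X^m.
  by rewrite [RHS]mulrAC -[in RHS]exprD subnK // -addnn exprD; ring.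
by rewrite modp_mull linear0.
Qed.

Lemma Xpow_not_qsemisimple : ~ qsemisimple gl_br Der Ad.
Proof.
apply: (abelian_ideal_not_qsemisimple (Ad_subsp k m) Xpow_ideal_qideal
  Xpow_ideal_abelian (E := der_mx n 'X^r)); first by exists 1; rewrite mulr1.
move=> /Ad_eq0 /(der_mx_eq0 n_gt0); rewrite modp_small ?size_polyXn //.
by move/eqP; rewrite -size_poly_eq0 size_polyXn.
Qed.

End PowerIdeal.

Section Dimension2.
Variable k : fieldType.
Hypothesis two0 : 2%:R = 0 :> k.

Definition const_ideal (D : 'M[k]_2) := exists c : k, D = der_mx 1 c%:P.

Lemma const_ideal_qideal : qideal (@gl_br k 2) (@Der k 2) (@Ad k 2) const_ideal.
Proof.
have const_subsp : subsp const_ideal.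
  split=> [|a _ _ [c ->] [d ->]]; first by exists 0; rewrite linear0.
  by exists (a * c + d); rewrite -linearP polyCD polyCM mul_polyC.
split=> // [D /Ad_eq0 ->|_ [c ->]|]; first exact: subsp0.
  exact: Der_der_mx.
apply: brsp_min => // _ _ /(DerP two0 isT) [f ->] [c ->].
rewrite -der_mx_modXn der_mx_br // derivC mulr0 sub0r.
have size_f' : (size (f %% 'X^2)^`() <= 1)%N.
  have [-> | f0] := eqVneq (f %% 'X^2) 0; first by rewrite deriv0 size_poly0.
  by have := lt_size_deriv f0; have := @size_modXn _ 1 f; lia.
by rewrite (size1_polyC size_f') -polyCM -polyCN; eexists.
Qed.

Lemma const_ideal_abelian :
  incl (brsp (@gl_br k 2) const_ideal const_ideal) (@Ad k 2).
Proof.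
apply: brsp_min => [|_ _ [c ->] [d ->]]; first exact: Ad_subsp.
by rewrite der_mx_br // !derivC !mulr0 subrr linear0; apply/Ad_eq0.
Qed.

Lemma dim2_not_qsemisimple : ~ qsemisimple (@gl_br k 2) (@Der k 2) (@Ad k 2).
Proof.
apply: (abelian_ideal_not_qsemisimple (Ad_subsp k 2) const_ideal_qideal
  const_ideal_abelian (E := der_mx 1 1%:P)); first by exists 1.
move=> /Ad_eq0 /(@der_mx_eq0 _ 1 isT); rewrite modp_small ?size_polyXn ?size_poly1 //.
by move/eqP; rewrite oner_eq0.
Qed.

End Dimension2.

Lemma dvdn_eq_or_double_leq d m : (0 < m)%N -> (d %| m)%N -> m = d \/ (d.*2 <= m)%N.
Proof.
move=> m_gt0 /dvdnP [[|[|c]] m_eq]; rewrite m_eq in m_gt0 *; first by [].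
  by left; rewrite mul1n.
by right; rewrite -mul2n leq_mul2r orbT.
Qed.

Theorem proposition3p3 (k : closedFieldType) (p m : nat)
  (hp : p \in [pchar k]) (hm : (2 <= m)%N) (hpm : (p %| m)%N) :
  [<-> qsimple (@gl_br k m) (@Der k m) (@Ad k m);
       qsemisimple (@gl_br k m) (@Der k m) (@Ad k m);
       m = p /\ (2 < p)%N;
       qiso (@gl_br k m) (@Der k m) (@Ad k m)
            (@gl_br k p) (@Der k p) (@zerosp k p) /\ (2 < p)%N].
Proof.
case: m hm hpm => [//|n] n_gt0 hpm.
have m0 : n.+1%:R = 0 :> k by apply/eqP; rewrite -(dvdn_pcharf hp).
have p_gt1 := prime_gt1 (pcharf_prime hp).
tfae.
- exact: qsimple_qsemisimple (@Ad_eq0 k n.+1) (brsp_Der m0 n_gt0).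
- move=> hss; have [mp | le2p] := dvdn_eq_or_double_leq (ltn0Sn n) hpm.
    split=> //; rewrite ltn_neqAle p_gt1 andbT; apply/eqP => p2.
    apply: (dim2_not_qsemisimple (k := k)); first by rewrite p2; apply: pcharf0.
    by rewrite p2 -mp.
  have r0 : (n.+1 - p)%:R = 0 :> k by rewrite natrB ?m0 ?(pcharf0 hp) ?subrr //; lia.
  by case: (Xpow_not_qsemisimple m0 n_gt0 r0 _ _ hss); lia.
- case=> <- p_gt2; split=> //; exists idfun.
  split=> //= [u _|w Dw|u v _ _]; rewrite /zerosp ?subrr //; first by rewrite Ad_eq0.
  by exists w; rewrite subrr.
- case=> hiso p_gt2.
  apply: (qsimple_qiso (@Ad_eq0 k n.+1) _ (Der_subsp m0 n_gt0) hiso) => //.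
  exact: eq_qsimple (@Ad_eq0 k p) (Der_qsimple hp p_gt2).
Qed.
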